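(* Let $\mathcal{T}$ be a $\operatorname{Hom}$-finite Krull–Schmidt triangulated category over an algebraically closed field, $\mathcal{I}$ a functorially finite ideal, and $X\xrightarrow{f}Y\xrightarrow{g}Z\xrightarrow{h}X[1]$ a triangle. Then (1) $g$ is a right $\mathcal{I}$-approximation (resp. an $\mathcal{I}$-sink map) if and only if $h$ is a left $\mathrm{Gh}_{\mathcal{I}}$-approximation (resp. a $\mathrm{Gh}_{\mathcal{I}}$-source map); (2) $f$ is a left $\mathcal{I}$-approximation (resp. an $\mathcal{I}$-source map) if and only if $h$ is a right $\mathrm{CoGh}_{\mathcal{I}[1]}$-approximation (resp. a $\mathrm{CoGh}_{\mathcal{I}[1]}$-sink map).
   Context: Composition of $f:X\to Y$, $g:Y\to Z$ is $gf$. An ideal: subgroups $\mathcal{I}(X,Y)\subseteq\operatorname{Hom}(X,Y)$ closed under composition. $\mathcal{I}[1]=\{f[1]:f\in\mathcal{I}\}$. $\mathrm{Gh}_{\mathcal{I}}=\{f: fi=0\ \forall\text{ composable } i\in\mathcal{I}\}$, $\mathrm{CoGh}_{\mathcal{I}}=\{f: if=0\ \forall\text{ composable } i\in\mathcal{I}\}$. For an ideal $\mathcal{A}$, a left (resp. right) $\mathcal{A}$-approximation of $T$ is a morphism in $\mathcal{A}$ starting (resp. ending) at $T$ through which all morphisms of $\mathcal{A}$ starting (resp. ending) at $T$ factor; $\mathcal{A}$ is functorially finite if all objects have both. An $\mathcal{A}$-source (resp. $\mathcal{A}$-sink) map is a left minimal left (resp. right minimal right) $\mathcal{A}$-approximation;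 $f$ is left minimal if $gf=f$ forces $g$ invertible, right minimal if $fg=f$ forces $g$ invertible. *)

From HB Require Import structures.
From mathcomp Require Import all_boot all_algebra.
Set Implicit Arguments. Unset Strict Implicit. Unset Printing Implicit Defensive.
Import GRing.Theory.
Local Open Scope ring_scope.

(* Composition is written as in the paper: [cmp g f] = gf (first f, then g). *)
Record LinCat (k : fieldType) := {
  Obj :> Type;
  Mor : Obj -> Obj -> vectType k;
  idm : forall X, Mor X X;
  cmp : forall X Y Z, Mor Y Z -> Mor X Y -> Mor X Z;
  cmpA : forall X Y Z W (h : Mor Z W) (g : Mor Y Z) (f : Mor X Y),
      cmp h (cmp g f) = cmp (cmp h g) f;
  cmp1l : forall X Y (f : Mor X Y), cmp (idm Y) f = f;
  cmp1r : forall X Y (f : Mor X Y), cmp f (idm X) = f;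
  cmp_linl : forall X Y Z (f : Mor X Y) (a : k) (g1 g2 : Mor Y Z),
      cmp (a *: g1 + g2) f = a *: cmp g1 f + cmp g2 f;
  cmp_linr : forall X Y Z (g : Mor Y Z) (a : k) (f1 f2 : Mor X Y),
      cmp g (a *: f1 + f2) = a *: cmp g f1 + cmp g f2
}.
Arguments Mor {k} C X Y : rename.
Arguments idm {k C} X : rename.
Arguments cmp {k C X Y Z} g f : rename.

Section Basic.
Variables (k : fieldType) (C : LinCat k).

Definition is_iso (X Y : C) (f : Mor C X Y) : Prop :=
  exists g : Mor C Y X, cmp g f = idm X /\ cmp f g = idm Y.

Definition local_obj (X : C) : Prop :=
  idm X != 0 /\ forall e : Mor C X X, is_iso e \/ is_iso (idm X - e).

Definition ks_decomposable (X : C) : Prop :=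
  exists (n : nat) (Xs : 'I_n -> C)
         (inj : forall i, Mor C (Xs i) X) (prj : forall i, Mor C X (Xs i)),
    [/\ forall i, cmp (prj i) (inj i) = idm (Xs i),
        forall i j, i != j -> cmp (prj i) (inj j) = 0,
        \sum_(i < n) cmp (inj i) (prj i) = idm X
      & forall i, local_obj (Xs i)].

Definition additive : Prop :=
  (exists O : C, idm O = 0) /\
  forall X1 X2 : C, exists (S : C) (i1 : Mor C X1 S) (i2 : Mor C X2 S)
                           (p1 : Mor C S X1) (p2 : Mor C S X2),
    [/\ cmp p1 i1 = idm X1, cmp p2 i2 = idm X2, cmp p2 i1 = 0, cmp p1 i2 = 0
      & cmp i1 p1 + cmp i2 p2 = idm S].

Definition krull_schmidt : Prop := forall X : C, ks_decomposable X.
End Basic.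

Record TriStruct (k : fieldType) (C : LinCat k) := {
  sh : C -> C;
  shm : forall X Y : C, Mor C X Y -> Mor C (sh X) (sh Y);
  shm_lin : forall X Y (a : k) (f g : Mor C X Y),
      shm (a *: f + g) = a *: shm f + shm g;
  shm_id : forall X, shm (idm X) = idm (sh X);
  shm_cmp : forall X Y Z (g : Mor C Y Z) (f : Mor C X Y),
      shm (cmp g f) = cmp (shm g) (shm f);
  shm_bij : forall X Y, bijective (@shm X Y);
  sh_esurj : forall Y : C, exists (X : C) (u : Mor C (sh X) Y), is_iso u;
  dist : forall X Y Z : C, Mor C X Y -> Mor C Y Z -> Mor C Z (sh X) -> Prop;
  TR1_iso : forall X Y Z (f : Mor C X Y) (g : Mor C Y Z) (h : Mor C Z (sh X))
      X' Y' Z' (f' : Mor C X' Y') (g' : Mor C Y' Z') (h' : Mor C Z' (sh X'))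
      (a : Mor C X X') (b : Mor C Y Y') (c : Mor C Z Z'),
      dist f g h -> is_iso a -> is_iso b -> is_iso c ->
      cmp f' a = cmp b f -> cmp g' b = cmp c g -> cmp h' c = cmp (shm a) h ->
      dist f' g' h';
  TR1_id : forall (X O : C), idm O = 0 ->
      dist (idm X) (0 : Mor C X O) (0 : Mor C O (sh X));
  TR1_ext : forall X Y (f : Mor C X Y),
      exists (Z : C) (g : Mor C Y Z) (h : Mor C Z (sh X)), dist f g h;
  TR2 : forall X Y Z (f : Mor C X Y) (g : Mor C Y Z) (h : Mor C Z (sh X)),
      dist f g h <-> dist g h (- shm f);
  TR3 : forall X Y Z (f : Mor C X Y) (g : Mor C Y Z) (h : Mor C Z (sh X))
      X' Y' Z' (f' : Mor C X' Y') (g' : Mor C Y' Z') (h' : Mor C Z' (sh X'))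
      (a : Mor C X X') (b : Mor C Y Y'),
      dist f g h -> dist f' g' h' -> cmp b f = cmp f' a ->
      exists c : Mor C Z Z', cmp c g = cmp g' b /\ cmp h' c = cmp (shm a) h;
  TR4 : forall X Y Z (f : Mor C X Y) (g : Mor C Y Z)
      Z' (u : Mor C Y Z') (u' : Mor C Z' (sh X))
      X' (v : Mor C Z X') (v' : Mor C X' (sh Y))
      Y' (w : Mor C Z Y') (w' : Mor C Y' (sh X)),
      dist f u u' -> dist g v v' -> dist (cmp g f) w w' ->
      exists (a : Mor C Z' Y') (b : Mor C Y' X'),
        [/\ dist a b (cmp (shm u) v'),
            cmp a u = cmp w g, cmp w' a = u',
            cmp b w = v & cmp v' b = cmp (shm f) w']
}.
Arguments sh {k C} T X : rename.
Arguments shm {k C} T {X Y} f : rename.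
Arguments dist {k C} T {X Y Z} f g h : rename.

Section Ideals.
Variables (k : fieldType) (C : LinCat k).

Definition morclass := forall X Y : C, Mor C X Y -> Prop.

Definition ideal (I : morclass) : Prop :=
  [/\ forall X Y, I X Y 0,
      forall X Y (f g : Mor C X Y), I X Y f -> I X Y g -> I X Y (f - g),
      forall X Y Z (g : Mor C Y Z) (f : Mor C X Y), I X Y f -> I X Z (cmp g f)
    & forall X Y Z (g : Mor C Y Z) (f : Mor C X Y), I Y Z g -> I X Z (cmp g f)].

Definition Gh (I : morclass) : morclass := fun X Y f =>
  forall W (i : Mor C W X), I W X i -> cmp f i = 0.

Definition CoGh (I : morclass) : morclass := fun X Y f =>
  forall W (i : Mor C Y W), I Y W i -> cmp i f = 0.

Definition left_approx (A : morclass) (T B : C) (a : Mor C T B) : Prop :=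
  A T B a /\ forall B' (a' : Mor C T B'), A T B' a' ->
    exists t : Mor C B B', a' = cmp t a.

Definition right_approx (A : morclass) (T B : C) (a : Mor C B T) : Prop :=
  A B T a /\ forall B' (a' : Mor C B' T), A B' T a' ->
    exists t : Mor C B' B, a' = cmp a t.

Definition left_minimal (X Y : C) (f : Mor C X Y) : Prop :=
  forall g : Mor C Y Y, cmp g f = f -> is_iso g.

Definition right_minimal (X Y : C) (f : Mor C X Y) : Prop :=
  forall g : Mor C X X, cmp f g = f -> is_iso g.

Definition source_map (A : morclass) (T B : C) (a : Mor C T B) : Prop :=
  left_approx A a /\ left_minimal a.

Definition sink_map (A : morclass) (T B : C) (a : Mor C B T) : Prop :=
  right_approx A a /\ right_minimal a.

Definition functorially_finite (A : morclass) : Prop :=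
  forall T : C,
    (exists (B : C) (a : Mor C T B), left_approx A a) /\
    (exists (B : C) (a : Mor C B T), right_approx A a).

Definition hcast (X Y X' Y' : C) (eX : X = X') (eY : Y = Y') (f : Mor C X Y)
  : Mor C X' Y' :=
  match eX in _ = X1, eY in _ = Y1 return Mor C X1 Y1 with
  | erefl, erefl => f end.

Definition shift_class (T : TriStruct C) (I : morclass) : morclass :=
  fun A B u => exists (X Y : C) (f : Mor C X Y) (eA : sh T X = A) (eB : sh T Y = B),
    I X Y f /\ u = hcast eA eB (shm T f).
End Ideals.
Arguments left_approx {k C} A {T B} a.
Arguments right_approx {k C} A {T B} a.
Arguments source_map {k C} A {T B} a.
Arguments sink_map {k C} A {T B} a.

(* In a triangle A -u-> B -v-> D -w-> A[1], u is a weak kernel of v and v a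
   weak cokernel of u, and the same holds for every rotation.  Hence v kills
   the ideal I exactly when every map of I into B factors through u: a right
   I-approximation u gives a left Gh_I-approximation v, and conversely once v
   is compared with the triangle on a genuine right I-approximation of B,
   which exists because I is functorially finite.  Part (2) is the same
   argument for the pair (u, w), the shift being an equivalence.
   Minimality transfers because an endomorphism of B that fixes one neighbour
   of B and induces an isomorphism on the other differs from the identity by a
   map factoring through that neighbour; this yields a one-sided inverse, which
   is two-sided since endomorphism rings are finite-dimensional. *)

From Pilot Require Import Defs.
From HB Require Import structures.
From mathcomp Require Import all_boot all_algebra.
Set Implicit Arguments. Unset Strict Implicit. Unset Printing Implicit Defensive.
Import GRing.Theory.
Local Open Scope ring_scope.

Section LinearCategory.
Variables (k : fieldType) (C : LinCat k).

HB.instance Definition _ (X Y Z : C) (g : Mor C Y Z) :=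
  GRing.isLinear.Build k (Mor C X Y) (Mor C X Z) _ (cmp g) (cmp_linr g).

Definition cmpr {X Y Z : C} (f : Mor C X Y) (g : Mor C Y Z) : Mor C X Z := cmp g f.

HB.instance Definition _ (X Y Z : C) (f : Mor C X Y) :=
  GRing.isLinear.Build k (Mor C Y Z) (Mor C X Z) _ (@cmpr X Y Z f) (cmp_linl f).

Lemma cmp0l X Y Z (f : Mor C X Y) : cmp (0 : Mor C Y Z) f = 0.
Proof. exact: raddf0 (cmpr f). Qed.

Lemma cmp0r X Y Z (g : Mor C Y Z) : cmp g (0 : Mor C X Y) = 0.
Proof. exact: raddf0. Qed.

Lemma cmpNl X Y Z (f : Mor C X Y) (g : Mor C Y Z) : cmp (- g) f = - cmp g f.
Proof. exact: raddfN (cmpr f) g. Qed.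

Lemma cmpNr X Y Z (f : Mor C X Y) (g : Mor C Y Z) : cmp g (- f) = - cmp g f.
Proof. exact: raddfN (cmp g) f. Qed.

Lemma cmpBl X Y Z (f : Mor C X Y) (g1 g2 : Mor C Y Z) :
  cmp (g1 - g2) f = cmp g1 f - cmp g2 f.
Proof. exact: raddfB (cmpr f) g1 g2. Qed.

Lemma cmpBr X Y Z (g : Mor C Y Z) (f1 f2 : Mor C X Y) :
  cmp g (f1 - f2) = cmp g f1 - cmp g f2.
Proof. exact: raddfB (cmp g) f1 f2. Qed.

Lemma endo_linv_rinv (Y : C) (e s : Mor C Y Y) : cmp e s = idm Y -> cmp s e = idm Y.
Proof.
move=> es; pose L := linfun (@cmp _ C Y Y Y s).
have kerL : lker L == 0%VS.
  apply/lker0P => x y; rewrite !lfunE /= => /(congr1 (cmp e)).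
  by rewrite !cmpA es !cmp1l.
have sV : cmp s ((L^-1)%VF (idm Y)) = idm Y.
  by rewrite -[RHS](lker0_lfunVK kerL) lfunE.
suff -> : e = (L^-1)%VF (idm Y) by [].
by rewrite -[e]cmp1r -{1}sV cmpA es cmp1l.
Qed.

Lemma endo_rinv_iso (Y : C) (s e : Mor C Y Y) : cmp s e = idm Y -> is_iso s.
Proof. by move=> se; exists e; split; first exact: endo_linv_rinv. Qed.

Lemma endo_linv_iso (Y : C) (e s : Mor C Y Y) : cmp e s = idm Y -> is_iso s.
Proof. by move/endo_linv_rinv; apply: endo_rinv_iso. Qed.

Lemma hcastE (P Q R : C) (e : P = Q) (m : Mor C P R) :
  hcast e erefl m = cmp m (hcast e erefl (idm P)).
Proof. by case: Q / e; rewrite /= cmp1r. Qed.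

End LinearCategory.

Section Triangles.
Variables (k : fieldType) (C : LinCat k) (T : TriStruct C).

HB.instance Definition _ (X Y : C) :=
  GRing.isLinear.Build k (Mor C X Y) (Mor C (sh T X) (sh T Y)) _ (@shm _ _ T X Y)
    (@shm_lin _ _ T X Y).

Lemma shmN X Y (f : Mor C X Y) : shm T (- f) = - shm T f.
Proof. exact: raddfN. Qed.

Lemma shm_inj X Y : injective (@shm _ _ T X Y).
Proof. exact: bij_inj (shm_bij T X Y). Qed.

Lemma shm_surj X Y (v : Mor C (sh T X) (sh T Y)) : exists u, v = shm T u.
Proof. by have [u _ uK] := shm_bij T X Y; exists (u v); rewrite uK. Qed.

Lemma shm_isoE X Y (a : Mor C X Y) : is_iso (shm T a) <-> is_iso a.
Proof.
split=> [[b' [b'a ab']] | [b [ba ab]]]; last first.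
  by exists (shm T b); rewrite -!shm_cmp ba ab !shm_id.
have [b Eb] := shm_surj b'; subst b'.
by exists b; split; apply: shm_inj; rewrite shm_cmp shm_id.
Qed.

Lemma dist_rot X Y Z (f : Mor C X Y) (g : Mor C Y Z) (h : Mor C Z (sh T X)) :
  dist T f g h -> dist T g h (- shm T f).
Proof. by move/TR2. Qed.

Variables (O : C) (HO : idm O = 0).

Section Triangle.
Variables (A B D : C) (u : Mor C A B) (v : Mor C B D) (w : Mor C D (sh T A)).
Hypothesis d : dist T u v w.

Lemma dist_cmp0 : cmp v u = 0.
Proof.
have [c [cu _]] := TR3 (TR1_id T A HO) d (erefl (cmp u (idm A))).
by rewrite -cu cmp0r.
Qed.

Lemma dist_weak_kernel W (y : Mor C W B) : cmp v y = 0 -> exists t, y = cmp u t.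
Proof.
move=> vy.
have E : cmp (0 : Mor C O D) (0 : Mor C W O) = cmp v y by rewrite vy cmp0r.
have [c [_ wc]] := TR3 (dist_rot (TR1_id T W HO)) (dist_rot d) E.
have [t Et] := shm_surj c; subst c.
exists t; apply: shm_inj; apply: oppr_inj.
by rewrite shm_cmp -cmpNl wc shm_id cmpNr cmp1r.
Qed.

Lemma dist_weak_cokernel W (y : Mor C B W) : cmp y u = 0 -> exists t, y = cmp t v.
Proof.
move=> yu.
have shO : idm (sh T O) = 0 by rewrite -shm_id HO raddf0.
have d' : dist T (0 : Mor C O W) (idm W) 0.
  by apply/TR2; rewrite raddf0 oppr0; apply: TR1_id.
have E : cmp y u = cmp (0 : Mor C O W) (0 : Mor C A O) by rewrite yu cmp0r.
have [c [cv _]] := TR3 d d' E.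
by exists c; rewrite cv cmp1l.
Qed.

Lemma mid_iso_of_fix_out (a : Mor C A A) (phi : Mor C B B) :
  cmp v phi = v -> is_iso a -> cmp phi u = cmp u a -> is_iso phi.
Proof.
move=> vphi [a' [_ aa']] phiu.
have [t Et] : exists t, phi - idm B = cmp u t.
  by apply: dist_weak_kernel; rewrite cmpBr vphi cmp1r subrr.
apply: (endo_rinv_iso (e := idm B - cmp u (cmp a' t))).
rewrite cmpBr cmp1r !cmpA phiu -(cmpA u) aa' cmp1r -Et.
by rewrite opprB addrC subrK.
Qed.

Lemma mid_iso_of_fix_in (c : Mor C D D) (phi : Mor C B B) :
  cmp phi u = u -> is_iso c -> cmp v phi = cmp c v -> is_iso phi.
Proof.
move=> phiu [c' [c'c _]] vphi.
have [t Et] : exists t, phi - idm B = cmp t v.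
  by apply: dist_weak_cokernel; rewrite cmpBl phiu cmp1l subrr.
apply: (endo_linv_iso (e := idm B - cmp t (cmp c' v))).
rewrite cmpBl cmp1l -!cmpA vphi (cmpA c') c'c cmp1l -Et.
by rewrite opprB addrC subrK.
Qed.

End Triangle.

Lemma dist_shm_cmp0 A B D (u : Mor C A B) (v : Mor C B D) (w : Mor C D (sh T A)) :
  dist T u v w -> cmp (shm T u) w = 0.
Proof.
move=> d; apply/eqP; rewrite -oppr_eq0 -cmpNl.
by rewrite (dist_cmp0 (dist_rot (dist_rot d))).
Qed.

Lemma dist_shm_weak_cokernel A B D (u : Mor C A B) (v : Mor C B D)
    (w : Mor C D (sh T A)) B' (a : Mor C A B') :
  dist T u v w -> cmp (shm T a) w = 0 -> exists t, a = cmp t u.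
Proof.
move=> d aw.
have [s Es] := dist_weak_cokernel (dist_rot (dist_rot d)) aw.
have [t Et] := shm_surj s; subst s.
exists (- t); apply: shm_inj.
by rewrite Es shm_cmp shmN cmpNl cmpNr.
Qed.

End Triangles.

Arguments shm_inj {k C} T {X Y}.

Section Approximations.
Variables (k : fieldType) (C : LinCat k) (T : TriStruct C) (O : C) (HO : idm O = 0).
Variables (I : morclass C) (HI : ideal I).

(* A map of I[1] out of X[1] may come from some X0 <> X with X0[1] = X[1];
   precomposing with the desuspended identification brings it back into I. *)
Lemma CoGh_shift_classP Z X (x : Mor C Z (sh T X)) :
  CoGh (shift_class T I) x <-> forall B (a : Mor C X B), I a -> cmp (shm T a) x = 0.
Proof.
split=> [xC B a Ia | xC W i [X0 [B [a [eX [eW [Ia ->]]]]]]].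
  by apply: xC; exists X, B, a, erefl, erefl.
clear i; case: W / eW; rewrite hcastE.
have [q ->] := shm_surj (hcast eX erefl (idm (sh T X0))).
by rewrite -shm_cmp xC //; case: HI => _ _ _; apply.
Qed.

Lemma Gh_of_right_approx A B D (u : Mor C A B) (v : Mor C B D) (w : Mor C D (sh T A)) :
  dist T u v w -> right_approx I u -> Gh I v.
Proof.
move=> d [_ uA] W i /uA [t ->].
by rewrite cmpA (dist_cmp0 HO d) cmp0l.
Qed.

Lemma CoGh_of_left_approx A B D (u : Mor C A B) (v : Mor C B D) (w : Mor C D (sh T A)) :
  dist T u v w -> left_approx I u -> CoGh (shift_class T I) w.
Proof.
move=> d [_ uA]; apply/CoGh_shift_classP => B' a /uA [t ->].
by rewrite shm_cmp -cmpA (dist_shm_cmp0 HO d) cmp0r.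
Qed.

Section Triangle.
Variables (A B D : C) (u : Mor C A B) (v : Mor C B D) (w : Mor C D (sh T A)).
Hypothesis d : dist T u v w.

Lemma right_approx_left_Gh : right_approx I u -> left_approx (Gh I) v.
Proof.
move=> uA; split; first exact: Gh_of_right_approx d uA.
by move=> D' a aGh; apply: (dist_weak_cokernel HO d); apply: aGh; case: uA.
Qed.

Lemma left_Gh_right_approx :
  (exists A0 (u0 : Mor C A0 B), right_approx I u0) ->
  left_approx (Gh I) v -> right_approx I u.
Proof.
move=> [A0 [u0 u0A]] [vGh vA].
have [D0 [v0 [w0 d0]]] := TR1_ext T u0.
have [s Es] := vA _ _ (Gh_of_right_approx d0 u0A).
have [t Et] : exists t, u = cmp u0 t.
  by apply: (dist_weak_kernel HO d0); rewrite Es -cmpA (dist_cmp0 HO d) cmp0r.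
case: HI => _ _ _ IR; split; first by rewrite Et; apply: IR; case: u0A.
by move=> A' a Ia; apply: (dist_weak_kernel HO d); apply: vGh.
Qed.

Lemma sink_map_source_Gh : sink_map I u -> source_map (Gh I) v.
Proof.
move=> [uA uMin]; split; first exact: right_approx_left_Gh.
move=> phi phiv; have d' := dist_rot d.
have [c [cw wc]] := TR3 d' d' (etrans phiv (esym (cmp1r v))).
have [e Ee] := shm_surj c; subst c.
have ue : cmp u e = u.
  by apply: (shm_inj T); apply: oppr_inj; rewrite shm_cmp -cmpNl wc shm_id cmp1l.
by apply: (mid_iso_of_fix_in HO d' phiv _ (esym cw)); apply/shm_isoE/uMin.
Qed.

Lemma source_Gh_sink_map :
  (exists A0 (u0 : Mor C A0 B), right_approx I u0) ->
  source_map (Gh I) v -> sink_map I u.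
Proof.
move=> uapprox [vA vMin]; split; first exact: left_Gh_right_approx.
move=> e ue.
have [c [cv wc]] := TR3 d d (etrans (cmp1l u) (esym ue)).
have cIso : is_iso c by apply: vMin; rewrite cv cmp1r.
apply/shm_isoE; apply: (mid_iso_of_fix_out HO (dist_rot (dist_rot d)) _ cIso).
  by rewrite cmpNl -shm_cmp ue.
by rewrite wc.
Qed.

Lemma left_approx_right_CoGh : left_approx I u -> right_approx (CoGh (shift_class T I)) w.
Proof.
move=> uA; split; first exact: CoGh_of_left_approx d uA.
move=> D' a aC; apply: (dist_weak_kernel HO (dist_rot (dist_rot d))).
by rewrite cmpNl ((CoGh_shift_classP a).1 aC) ?oppr0 //; case: uA.
Qed.

Lemma right_CoGh_left_approx :
  (exists B0 (u0 : Mor C A B0), left_approx I u0) ->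
  right_approx (CoGh (shift_class T I)) w -> left_approx I u.
Proof.
move=> [B0 [u0 u0A]] [wC wA].
have [D0 [v0 [w0 d0]]] := TR1_ext T u0.
have [t Et] := wA _ _ (CoGh_of_left_approx d0 u0A).
have [s Es] : exists s, u = cmp s u0.
  by apply: (dist_shm_weak_cokernel HO d0); rewrite Et cmpA (dist_shm_cmp0 HO d) cmp0l.
case: HI => _ _ IL _; split; first by rewrite Es; apply: IL; case: u0A.
move=> B' a Ia; apply: (dist_shm_weak_cokernel HO d).
exact: (CoGh_shift_classP w).1 wC _ _ Ia.
Qed.

Lemma source_map_sink_CoGh : source_map I u -> sink_map (CoGh (shift_class T I)) w.
Proof.
move=> [uA uMin]; split; first exact: left_approx_right_CoGh.
move=> phi wphi; have d2 := dist_rot (dist_rot d).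
have [c [cu vc]] := TR3 d2 d2 (etrans (cmp1l w) (esym wphi)).
have [psi Epsi] := shm_surj c; subst c.
have psiu : cmp psi u = u.
  by apply: (shm_inj T); apply: oppr_inj; rewrite shm_cmp -cmpNr cu cmp1r.
apply: (mid_iso_of_fix_out HO (dist_rot d) wphi (uMin _ psiu)).
by apply: (shm_inj T); apply: oppr_inj; rewrite !shm_cmp -cmpNr -cmpNl vc.
Qed.

Lemma sink_CoGh_source_map :
  (exists B0 (u0 : Mor C A B0), left_approx I u0) ->
  sink_map (CoGh (shift_class T I)) w -> source_map I u.
Proof.
move=> uapprox [wA wMin]; split; first exact: right_CoGh_left_approx.
move=> psi psiu.
have [c [cv wc]] := TR3 d d (etrans psiu (esym (cmp1r u))).
have cIso : is_iso c by apply: wMin; rewrite wc shm_id cmp1l.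
exact: (mid_iso_of_fix_in HO d psiu cIso (esym cv)).
Qed.

End Triangle.
End Approximations.

(* [GRing.Theory] shadows [Defs.additive]. *)
Import Pilot.Defs.

Theorem lemma3p7 (k : closedFieldType) (C : LinCat k) (T : TriStruct C)
  (Hadd : additive C) (Hks : krull_schmidt C)
  (I : morclass C) (HI : ideal I) (Hff : functorially_finite I)
  (X Y Z : C) (f : Mor C X Y) (g : Mor C Y Z) (h : Mor C Z (sh T X))
  (Htri : dist T f g h) :
  ((right_approx I g <-> left_approx (Gh I) h) /\
   (sink_map I g <-> source_map (Gh I) h)) /\
  ((left_approx I f <-> right_approx (CoGh (shift_class T I)) h) /\
   (source_map I f <-> sink_map (CoGh (shift_class T I)) h)).
Proof.
have [[O HO] _] := Hadd.
have Hrot := dist_rot Htri.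
have [_ gApprox] := Hff Z.
have [fApprox _] := Hff X.
split; split; split.
- exact (right_approx_left_Gh HO Hrot).
- exact (left_Gh_right_approx HO HI Hrot gApprox).
- exact (sink_map_source_Gh HO Hrot).
- exact (source_Gh_sink_map HO HI Hrot gApprox).
- exact (left_approx_right_CoGh HO HI Htri).
- exact (right_CoGh_left_approx HO HI Htri fApprox).
- exact (source_map_sink_CoGh HO HI Htri).
- exact (sink_CoGh_source_map HO HI Htri fApprox).
Qed.
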